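(* Let $G_{12}$ be the graph with vertex set $\{1,\dots,12\}$ in which two distinct vertices are adjacent if and only if they both belong to one of the sets $\{1,4,7\}$, $\{2,4,5,6\}$, $\{2,4,6,7\}$, $\{2,4,6,9\}$, $\{2,4,9,12\}$, $\{2,5,8\}$, $\{2,6,7,11\}$, $\{2,11,12\}$, $\{3,6,9\}$, $\{4,5,6,10\}$, $\{4,10,12\}$, $\{6,10,11\}$, $\{10,11,12\}$. Then $G_{12}$ is not $\cup$-semi-weakly CIS, i.e., neither $G_{12}$ nor its complement is semi-weakly CIS.
   Context: A strong clique of a graph is a clique meeting every maximal stable set. A graph is semi-weakly CIS if it admits a family of strong cliques such that every two adjacent vertices lie together in some member. A graph is $\cup$-semi-weakly CIS if it or its complement is semi-weakly CIS. *)

From mathcomp Require Import all_boot.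
Set Implicit Arguments. Unset Strict Implicit. Unset Printing Implicit Defensive.

(* Simple graphs on a finite vertex type T are given by an adjacency relation
   e : rel T (intended symmetric and irreflexive). *)

Section Graphs.
Variable T : finType.
Variable e : rel T.

Definition stable (S : {set T}) : bool :=
  [forall x in S, forall y in S, ~~ e x y].

Definition clique (C : {set T}) : bool :=
  [forall x in C, forall y in C, (x != y) ==> e x y].

Definition maximal_stable (S : {set T}) : bool :=
  stable S && [forall S' : {set T}, (stable S' && (S \subset S')) ==> (S' == S)].

Definition strong_clique (C : {set T}) : bool :=
  clique C && [forall S : {set T}, maximal_stable S ==> (C :&: S != set0)].

Definition semi_weakly_CIS : Prop :=
  exists F : {set {set T}},
    (forall C, C \in F -> strong_clique C) /\
    (forall x y, e x y -> exists2 C, C \in F & (x \in C) && (y \in C)).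
End Graphs.

Definition compl_rel (T : finType) (e : rel T) : rel T :=
  fun x y => (x != y) && ~~ e x y.

Definition cup_semi_weakly_CIS (T : finType) (e : rel T) : Prop :=
  semi_weakly_CIS e \/ semi_weakly_CIS (compl_rel e).

(* The graph G_12: vertex i : 'I_12 stands for the integer i+1. *)
Definition G12_blocks : seq (seq nat) :=
  [:: [:: 1; 4; 7]; [:: 2; 4; 5; 6]; [:: 2; 4; 6; 7]; [:: 2; 4; 6; 9];
      [:: 2; 4; 9; 12]; [:: 2; 5; 8]; [:: 2; 6; 7; 11]; [:: 2; 11; 12];
      [:: 3; 6; 9]; [:: 4; 5; 6; 10]; [:: 4; 10; 12]; [:: 6; 10; 11];
      [:: 10; 11; 12]].

Definition G12 : rel 'I_12 :=
  fun x y => (x != y) &&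
    has (fun B => (x.+1 \in B) && (y.+1 \in B)) G12_blocks.

(* A strong clique C through an edge xy meets every maximal stable set, so if
   S1 and S2 are maximal stable sets, C contains some a in S1 and b in S2 and
   {a, b, x, y} is a clique.  For G12 the edge {2,4} with S1 = {1,3,8,10} and
   S2 = {1,3,5,11} admits no such a, b; for the complement of G12 the edge {1,5}
   with S1 = {4,10,12} and S2 = {6,10,11} admits none either. *)

From mathcomp Require Import all_boot.

Set Implicit Arguments.
Unset Strict Implicit.
Unset Printing Implicit Defensive.

Section StrongCliques.
Variables (T : finType) (e : rel T).

Lemma clique_subset (C D : {set T}) :
  D \subset C -> clique e C -> clique e D.
Proof.
move=> /subsetP sDC /forallP cC; apply/forallP=> u; apply/implyP=> uD.
apply/forallP=> v; apply/implyP=> vD.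
by have /implyP/(_ (sDC u uD))/forallP/(_ v)/implyP := cC u; apply; apply: sDC.
Qed.

Lemma maximal_stable_dominating (S : {set T}) :
  stable e S -> (forall v, v \notin S -> exists2 u, u \in S & e u v) ->
  maximal_stable e S.
Proof.
move=> stS domS; rewrite /maximal_stable stS; apply/forallP=> S'.
apply/implyP=> /andP[stS' sSS']; rewrite eqEsubset sSS' andbT.
apply/subsetP=> v vS'; apply/negPn/negP=> /domS[u uS euv].
move/forallP: stS' => /(_ u) /implyP /(_ (subsetP sSS' u uS)) /forallP /(_ v).
by rewrite vS' euv.
Qed.

Lemma strong_clique_meet (C S : {set T}) :
  strong_clique e C -> maximal_stable e S -> exists2 a, a \in C & a \in S.
Proof.
case/andP=> _ /forallP/(_ S)/implyP meetCS /meetCS /set0Pn[a].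
by rewrite inE => /andP[aC aS]; exists a.
Qed.

Theorem not_semi_weakly_CIS (x y : T) (S1 S2 : {set T}) :
  e x y -> maximal_stable e S1 -> maximal_stable e S2 ->
  (forall a b, a \in S1 -> b \in S2 -> ~~ clique e [set a; b; x; y]) ->
  ~ semi_weakly_CIS e.
Proof.
move=> exy maxS1 maxS2 noclique [F [strongF coverF]].
have [C CF /andP[xC yC]] := coverF x y exy.
have [a aC aS1] := strong_clique_meet (strongF C CF) maxS1.
have [b bC bS2] := strong_clique_meet (strongF C CF) maxS2.
have /negP := noclique a b aS1 bS2; apply.
apply: (@clique_subset C); last exact: (andP (strongF C CF)).1.
by apply/subsetP=> u; rewrite !inE -!orbA => /or4P[] /eqP->.
Qed.

Definition all_pairs (P : rel T) (s : seq T) : bool :=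
  all (fun u => all (P u) s) s.

Definition stable_seq : seq T -> bool := all_pairs (fun u v => ~~ e u v).

Definition clique_seq : seq T -> bool := all_pairs (fun u v => (u != v) ==> e u v).

Definition dominating_seq (r s : seq T) : bool :=
  all (fun v => (v \in s) || has (e^~ v) s) r.

Lemma forall_pairs_set_seq (P : rel T) (s : seq T) :
  [forall u in [set:: s], forall v in [set:: s], P u v] = all_pairs P s.
Proof.
apply/forallP/allP=> [h u us | h u]; last first.
  by apply/implyP; rewrite inE => us; apply/forallP=> v; rewrite inE;
    apply/implyP=> vs; exact: (allP (h u us)).
apply/allP=> v vs.
by have /implyP := h u; rewrite inE us => /(_ isT)/forallP/(_ v); rewrite inE vs.
Qed.

Lemma clique_set_seq (s : seq T) : clique e [set:: s] = clique_seq s.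
Proof. exact: forall_pairs_set_seq. Qed.

Lemma maximal_stable_set_seq (r s : seq T) :
  (forall v, v \in r) -> stable_seq s -> dominating_seq r s ->
  maximal_stable e [set:: s].
Proof.
move=> r_total stable_s /allP dom_s.
apply: maximal_stable_dominating; first by rewrite /stable forall_pairs_set_seq.
move=> v; rewrite inE => vs.
case/orP: (dom_s v (r_total v)) => [vs' | /hasP[u us euv]]; first by rewrite vs' in vs.
by exists u; rewrite ?inE.
Qed.

Theorem not_semi_weakly_CIS_seq (r : seq T) (x y : T) (s1 s2 : seq T) :
  (forall v, v \in r) -> e x y ->
  stable_seq s1 -> dominating_seq r s1 -> stable_seq s2 -> dominating_seq r s2 ->
  all (fun a => all (fun b => ~~ clique_seq [:: a; b; x; y]) s2) s1 ->
  ~ semi_weakly_CIS e.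
Proof.
move=> r_total exy st1 dom1 st2 dom2 /allP noclique.
apply: (not_semi_weakly_CIS exy (maximal_stable_set_seq r_total st1 dom1)
                                (maximal_stable_set_seq r_total st2 dom2)).
move=> a b; rewrite !inE => as1 bs2.
have -> : [set a; b; x; y] = [set:: [:: a; b; x; y]].
  by apply/setP=> u; rewrite !inE !orbA.
by rewrite clique_set_seq; exact: (allP (noclique a as1)).
Qed.

End StrongCliques.

(* Label [k] (1-based, as in the paper) is the ordinal [k - 1].  The [%% 12]
   is the identity on labels 1..12; it gives an ordinal that reduces under
   [vm_compute], unlike [inord], whose bound check goes through opaque [idP]. *)
Definition G12_vertex (k : nat) : 'I_12 := Ordinal (ltn_pmod k.-1 (isT : 0 < 12)).

Definition G12_vertices : seq 'I_12 := map G12_vertex (iota 1 12).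

Lemma G12_vertices_total (v : 'I_12) : v \in G12_vertices.
Proof.
apply/mapP; exists v.+1; first by rewrite mem_iota /= add1n ltnS ltn_ord.
by apply: ord_inj; rewrite /= modn_small.
Qed.

Theorem proposition35 :
  ~ cup_semi_weakly_CIS G12.
Proof.
case.
- apply: (not_semi_weakly_CIS_seq G12_vertices_total
    (x := G12_vertex 2) (y := G12_vertex 4)
    (s1 := map G12_vertex [:: 1; 3; 8; 10]) (s2 := map G12_vertex [:: 1; 3; 5; 11]));
  by vm_compute.
- apply: (not_semi_weakly_CIS_seq G12_vertices_total
    (x := G12_vertex 1) (y := G12_vertex 5)
    (s1 := map G12_vertex [:: 4; 10; 12]) (s2 := map G12_vertex [:: 6; 10; 11]));
  by vm_compute.
Qed.
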